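(* Let $L$ be a linear forest with $k$ vertices and let $n$ be a positive integer. If $G$ and $G'$ are $n$-vertex graphs all of whose components are cycles with at least $k+1$ vertices, then $s(G,L)=s(G',L)$; that is, the number of induced copies of $L$ depends only on $L$ and $n$.
   Context: A linear forest is a disjoint union of paths. For graphs $G$ and $H$, $s(G,H)$ is the number of vertex subsets $X\subseteq V(G)$ such that $G[X]$ is isomorphic to $H$. *)

From mathcomp Require Import all_boot.
Set Implicit Arguments. Unset Strict Implicit. Unset Printing Implicit Defensive.

Definition simple_graph (V : finType) (e : rel V) : Prop :=
  symmetric e /\ irreflexive e.

Definition component (V : finType) (e : rel V) (x : V) : {set V} :=
  [set y | connect e x y].

Definition induced_iso (V W : finType) (eG : rel V) (X : {set V}) (eH : rel W)
  : bool :=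
  [exists f : {ffun W -> V},
     [&& injectiveb f, f @: [set: W] == X &
         [forall u, forall v, eG (f u) (f v) == eH u v]]].

Definition s_count (V W : finType) (eG : rel V) (eH : rel W) : nat :=
  #|[set X : {set V} | induced_iso eG X eH]|.

Definition linear_forest (W : finType) (e : rel W) : Prop :=
  forall x : W, exists m (f : 'I_m -> W),
    injective f /\ f @: [set: 'I_m] = component e x /\
    forall i j : 'I_m, e (f i) (f j) = (i.+1 == j :> nat) || (j.+1 == i :> nat).

Definition cycle_components_atleast (V : finType) (e : rel V) (c : nat) : Prop :=
  forall x : V, exists m (f : 'I_m -> V),
    3 <= m /\ c <= m /\
    injective f /\ f @: [set: 'I_m] = component e x /\
    forall i j : 'I_m,
      e (f i) (f j) = (j == i.+1 %% m :> nat) || (i == j.+1 %% m :> nat).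

From HB Require Import structures.
From mathcomp Require Import all_boot all_order all_algebra zify.
Set Implicit Arguments. Unset Strict Implicit. Unset Printing Implicit Defensive.
Import Order.TTheory GRing.Theory Num.Theory.

(* Let f rotate every cycle of G by one step, so that f has no orbit of length
   at most k. Every induced copy of L is the image of exactly |Aut L| induced
   embeddings, and an embedding is a tuple (x_w) of vertices such that, for
   u <> v, x_u = f^(+-1) x_v when uv is an edge and x_u is none of
   f^-1 x_v, x_v, f x_v otherwise. Count the solutions of such systems of
   constraints "x_a is (or is not) in f^D x_b" by eliminating the unknowns one
   at a time: a positive constraint on x_0 is resolved by summing over its
   offsets and substituting, a negative one by complementation, a constraint of
   an unknown with itself by checking whether 0 is one of its offsets, and an
   unconstrained x_0 contributes a factor |V|. All offsets ever compared stay
   within [-k, k], so none of these steps sees the cycle lengths and the count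
   only depends on |V|. *)

Section IntegerIterates.
Variables (T : Type) (f g : T -> T).
Hypotheses (fK : cancel f g) (gK : cancel g f).

Definition iterz (d : int) (x : T) : T :=
  match d with Posz n => iter n f x | Negz n => iter n.+1 g x end.

Lemma iterzS d x : iterz (d + 1)%R x = f (iterz d x).
Proof.
case: d => [n|[|n]]; first by rewrite /= addn1.
  by rewrite /= gK.
have -> : (Negz n.+1 + 1 = Negz n)%R by rewrite !NegzE; lia.
by rewrite /= gK.
Qed.

Lemma iterzD a b x : iterz (a + b)%R x = iterz a (iterz b x).
Proof.
have iterzB1 d y : iterz (d - 1)%R y = g (iterz d y).
  by apply: (can_inj fK); rewrite gK -iterzS subrK.
case: a => n; elim: n => [|n IHn].
- by rewrite add0r.
- have -> : Posz n.+1 = (n%:Z + 1)%R by lia.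
  by rewrite addrAC !iterzS IHn.
- by rewrite -[Negz 0]/(0 - 1 : int)%R addrAC !iterzB1 add0r.
have -> : Negz n.+1 = (Negz n - 1)%R by rewrite !NegzE; lia.
by rewrite addrAC !iterzB1 IHn.
Qed.

Lemma iterzK d : cancel (iterz d) (iterz (- d)%R).
Proof. by move=> x; rewrite -iterzD addNr. Qed.

Lemma iterzKV d : cancel (iterz (- d)%R) (iterz d).
Proof. by move=> x; rewrite -iterzD addrN. Qed.

Lemma iterz_inj d : injective (iterz d).
Proof. exact: can_inj (iterzK d). Qed.

End IntegerIterates.

Section LongOrbits.
Variables (T : eqType) (f g : T -> T) (K : nat).
Hypotheses (fK : cancel f g) (gK : cancel g f).
Hypothesis long_orbits : forall x t, 0 < t <= K -> iter t f x != x.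

Lemma iterz_eq_id d x : (`|d| <= K%:Z)%R -> (iterz f g d x == x) = (d == 0%R).
Proof.
case: d => [[|n]|n] dK; first by rewrite eqxx.
  by rewrite /iterz (negbTE (long_orbits _ _)) //; lia.
apply/negbTE/eqP => /(congr1 (iter n.+1 f)).
rewrite -[iter _ f (iterz _ _ _ x)]/(iterz f g n.+1 (iterz f g (- n.+1%:Z)%R x)).
rewrite (iterzKV fK gK) => /esym/eqP; apply/negP/long_orbits.
by rewrite NegzE in dK; lia.
Qed.

Lemma iterz_eq d d' x : (`|d - d'| <= K%:Z)%R ->
  (iterz f g d x == iterz f g d' x) = (d == d').
Proof.
move=> dd'K; rewrite -(inj_eq (iterz_inj fK gK (d := (- d')%R))) (iterzK fK gK).
by rewrite -(iterzD fK gK) addrC iterz_eq_id // subr_eq0.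
Qed.

End LongOrbits.

Section TupleSums.
Variables (R : Type) (idx : R) (op : Monoid.com_law idx) (V : finType).

Lemma big_tuple_cons c (F : seq V -> R) :
  \big[op/idx]_(t : c.+1.-tuple V) F t =
  \big[op/idx]_(v : V) \big[op/idx]_(t : c.-tuple V) F (v :: t).
Proof.
rewrite pair_bigA /= (reindex (fun p : V * c.-tuple V => [tuple of p.1 :: p.2])) //=.
exists (fun t : c.+1.-tuple V => (thead t, [tuple of behead t])).
  by move=> [v t] _ /=; congr (_, _); apply: val_inj.
by move=> t _; rewrite [in RHS](tuple_eta t); apply: val_inj.
Qed.

End TupleSums.

Lemma sum_tuple_head_eq (V : finType) c j (h : V -> V) (x0 : V) (P : seq V -> bool) :
  \sum_(t : c.+1.-tuple V) (P t && (nth x0 t 0 == h (nth x0 t j.+1)) : nat) =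
  \sum_(t : c.-tuple V) P (h (nth x0 t j) :: t).
Proof.
pose F s := (P s && (nth x0 s 0 == h (nth x0 s j.+1)) : nat).
rewrite (big_tuple_cons _ _ F) exchange_big; apply: eq_bigr => t _ /=.
rewrite /F (bigD1 (h (nth x0 t j))) //= eqxx andbT big1 ?addn0 //.
by move=> v /negbTE ->; rewrite andbF.
Qed.

Record constr := Constr { lhs : nat; rhs : nat; offsets : seq int; positive : bool }.

Definition constr_tuple x := (lhs x, rhs x, offsets x, positive x).
Definition tuple_constr (p : nat * nat * seq int * bool) :=
  Constr p.1.1.1 p.1.1.2 p.1.2 p.2.
Lemma constr_tupleK : cancel constr_tuple tuple_constr. Proof. by case. Qed.
HB.instance Definition _ := Equality.copy constr (can_type constr_tupleK).

Definition flip x := Constr (rhs x) (lhs x) [seq (- e)%R | e <- offsets x] (positive x).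

Definition unshift0 j a := if a is a'.+1 then a' else j.

(* [subst0 j d] eliminates unknown 0 using x_0 = f^d x_(j+1), then renumbers
   x_(i+1) as x_i. *)
Definition subst0 j d x :=
  Constr (unshift0 j (lhs x)) (unshift0 j (rhs x))
    [seq (e - (if lhs x == 0 then d else 0) + (if rhs x == 0 then d else 0))%R
    | e <- offsets x] (positive x).

Definition drop0 x := Constr (lhs x).-1 (rhs x).-1 (offsets x) (positive x).

Definition weight (cs : seq constr) := sumn [seq (size (offsets x)).+1 | x <- cs].

Lemma weight_rem x cs : x \in cs -> weight cs = (size (offsets x)).+1 + weight (rem x cs).
Proof. by move=> xcs; rewrite /weight (perm_sumn (perm_map _ (perm_to_rem xcs))). Qed.

Section Solutions.
Variables (V : finType) (f g : V -> V) (x0 : V).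
Hypotheses (fK : cancel f g) (gK : cancel g f).

Local Notation iterz := (iterz f g).

Definition holds (s : seq V) (x : constr) : bool :=
  (nth x0 s (lhs x) \in [seq iterz d (nth x0 s (rhs x)) | d <- offsets x]) == positive x.

Definition nsol (c : nat) (cs : seq constr) : nat := \sum_(t : c.-tuple V) all (holds t) cs.

Lemma eq_nsol c cs cs' :
  (forall s, all (holds s) cs = all (holds s) cs') -> nsol c cs = nsol c cs'.
Proof. by move=> eq_cs; apply: eq_bigr => t _; rewrite eq_cs. Qed.

Lemma all_holds_rem cs x : x \in cs ->
  forall s, all (holds s) cs = holds s x && all (holds s) (rem x cs).
Proof. by move=> xcs s; rewrite (perm_all _ (perm_to_rem xcs)). Qed.

Lemma nsol_neg_nil c a b cs : nsol c (Constr a b [::] false :: cs) = nsol c cs.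
Proof. exact: eq_nsol. Qed.

Lemma holds_flip s x : holds s (flip x) = holds s x.
Proof.
rewrite /holds /=; congr (_ == _); apply/mapP/mapP => -[e].
  by move=> /mapP [e' e'D ->] ->; exists e' => //; rewrite iterzKV.
by move=> eD ->; exists (- e)%R; [apply: map_f | rewrite iterzK].
Qed.

Lemma mem_iterz_map (u w : V) du dw (D : seq int) :
  (iterz du u \in [seq iterz e (iterz dw w) | e <- D]) =
  (u \in [seq iterz (e - du + dw)%R w | e <- D]).
Proof.
suff -> : [seq iterz e (iterz dw w) | e <- D] =
          map (iterz du) [seq iterz (e - du + dw)%R w | e <- D].
  by rewrite mem_map //; apply: iterz_inj.
by rewrite -map_comp; apply: eq_map => e /=; rewrite -!iterzD // addrCA addrA subrK.
Qed.

Lemma holds_subst0 s j d x :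
  holds (iterz d (nth x0 s j) :: s) x = holds s (subst0 j d x).
Proof.
have nth_cons a : nth x0 (iterz d (nth x0 s j) :: s) a =
    iterz (if a == 0 then d else 0) (nth x0 s (unshift0 j a)) by case: a.
by rewrite /holds !nth_cons mem_iterz_map -map_comp.
Qed.

Lemma holds_drop0 s v x : lhs x != 0 -> rhs x != 0 -> holds (v :: s) x = holds s (drop0 x).
Proof. by case: x => [[|a] [|b] D p]. Qed.

End Solutions.

Section Elimination.
Variables (V : finType) (f g : V -> V) (x0 : V) (K : nat).
Hypotheses (fK : cancel f g) (gK : cancel g f).
Hypothesis long_orbits : forall x t, 0 < t <= K -> iter t f x != x.

Local Notation iterz := (iterz f g).
Local Notation holds := (holds f g x0).
Local Notation nsol := (nsol f g x0).

Lemma holds_loop s x : lhs x = rhs x -> {in offsets x, forall e, `|e| <= K%:Z}%R ->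
  holds s x = ((0%R \in offsets x) == positive x).
Proof.
move=> eq_ab small; rewrite /holds eq_ab; congr (_ == _).
apply/mapP/idP => [[e eD /esym/eqP]|D0]; last by exists 0%R.
by rewrite (iterz_eq_id fK gK long_orbits) ?small // => /eqP <-.
Qed.

Lemma count_mem_iterz (u w : V) (D : seq int) :
  uniq D -> {in D &, forall d d', `|d - d'| <= K%:Z}%R ->
  (u \in [seq iterz d w | d <- D]) = \sum_(d <- D) (u == iterz d w) :> nat.
Proof.
move=> uD smallD; rewrite -count_uniq_mem; last first.
  rewrite map_inj_in_uniq // => d d' dD d'D /eqP.
  by rewrite (iterz_eq fK gK long_orbits) ?smallD // => /eqP.
by rewrite count_map -sum1_count big_mkcond; apply: eq_bigr => d _; rewrite eq_sym.
Qed.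

Lemma nsol_loop c cs x : x \in cs -> lhs x = rhs x ->
  {in offsets x, forall e, `|e| <= K%:Z}%R ->
  nsol c cs = if (0%R \in offsets x) == positive x then nsol c (rem x cs) else 0.
Proof.
move=> xcs eq_ab small; case: ifP => loop_holds.
  by apply: eq_nsol => s; rewrite (all_holds_rem _ _ _ xcs) holds_loop ?loop_holds.
by apply: big1 => t _; rewrite (all_holds_rem _ _ _ xcs) holds_loop ?loop_holds.
Qed.

Lemma nsol_subst0 c j d cs :
  nsol c (map (subst0 j d) cs) =
  \sum_(t : c.+1.-tuple V) (all (holds t) cs && (nth x0 t 0 == iterz d (nth x0 t j.+1))).
Proof.
rewrite (sum_tuple_head_eq _ _ _ _ (fun s => all (holds s) cs)); apply: eq_bigr => t _.
by rewrite all_map; congr (nat_of_bool _); apply: eq_all => x; rewrite /= holds_subst0.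
Qed.

Lemma nsol_pos c j D R : uniq D -> {in D &, forall d d', `|d - d'| <= K%:Z}%R ->
  nsol c.+1 (Constr 0 j.+1 D true :: R) = \sum_(d <- D) nsol c (map (subst0 j d) R).
Proof.
move=> uD smallD; under eq_bigr do rewrite nsol_subst0.
rewrite exchange_big; apply: eq_bigr => t _.
rewrite /= /holds /= eqb_id -mulnb count_mem_iterz // big_distrl /=.
by apply: eq_bigr => d _; rewrite mulnb andbC.
Qed.

(* Complementation: x_0 avoids f^D x_(j+1) iff it avoids f^(e :: D) x_(j+1),
   or it equals f^e x_(j+1) and avoids f^D x_(j+1). *)
Lemma nsol_neg c j e D R :
  nsol c.+1 (Constr 0 j.+1 D false :: R) =
  nsol c.+1 (Constr 0 j.+1 (e :: D) false :: R) +
  nsol c (map (subst0 j e) (Constr 0 j.+1 D false :: R)).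
Proof.
rewrite nsol_subst0 -big_split; apply: eq_bigr => t _.
rewrite /= /holds /= in_cons.
by case: (_ == iterz e _); case: (_ \in _); case: all.
Qed.

Lemma nsol_free c cs : {in cs, forall x, lhs x != 0 /\ rhs x != 0} ->
  nsol c.+1 cs = #|V| * nsol c (map drop0 cs).
Proof.
move=> free0; rewrite /nsol (big_tuple_cons _ _ (fun s => all (holds s) cs : nat)).
rewrite -sum_nat_const; apply: eq_bigr => v _; apply: eq_bigr => t _.
rewrite all_map; congr (nat_of_bool _); apply: eq_in_all => x /free0 [x_a x_b].
by rewrite /= holds_drop0.
Qed.

End Elimination.

Section OrdinalSums.
Variable R : numDomainType.
Local Open Scope ring_scope.

Lemma sum_ord_pair_le c j (w : nat -> R) : (j < c)%N -> (forall i, 0 <= w i) ->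
  w 0%N + w j.+1 <= \sum_(i < c.+1) w i.
Proof.
move=> jc w_ge0; rewrite big_ord_recl lerD2l (bigD1 (Ordinal jc)) //= lerDl.
by apply: sumr_ge0 => i _.
Qed.

Lemma sum_ord_merge_le c j (w w' : nat -> R) : (j < c)%N -> (forall i, 0 <= w i) ->
  (forall i, i != j -> w' i = w i.+1) -> w' j <= w 0%N + w j.+1 ->
  \sum_(i < c) w' i <= \sum_(i < c.+1) w i.
Proof.
move=> jc w_ge0 w'E w'j; rewrite big_ord_recl.
rewrite [X in _ <= _ + X](bigD1 (Ordinal jc)) //= addrA.
rewrite [leLHS](bigD1 (Ordinal jc)) //= (eq_bigr (fun i : 'I_c => w i.+1)) ?lerD2r //.
by move=> i ij; rewrite w'E.
Qed.

Lemma sum_ord_behead_le c (w : nat -> R) : (forall i, 0 <= w i) ->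
  \sum_(i < c) w i.+1 <= \sum_(i < c.+1) w i.
Proof. by move=> w_ge0; rewrite big_ord_recl lerDr. Qed.

End OrdinalSums.

(* Unknown i stands for a block of positions reaching l i to its left and r i
   to its right. An offset between distinct unknowns is at most what lets their
   blocks touch, and the blocks have at most K positions in total, so no offset
   difference that ever arises exceeds K. *)
Section Admissible.
Variable K : nat.
Local Open Scope ring_scope.

Definition offset_range (l r : nat -> int) (a b : nat) (e : int) : bool :=
  if (a == b)%N then `|e| <= K%:Z else - (r a + l b + 1) <= e <= l a + r b + 1.

Definition admissible (c : nat) (cs : seq constr) (l r : nat -> int) : Prop :=
  [/\ \sum_(i < c) (l i + r i + 1) <= K%:Z, (forall i, 0 <= l i /\ 0 <= r i) &
   {in cs, forall x, [/\ (lhs x < c)%N, (rhs x < c)%N, uniq (offsets x) &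
                       {in offsets x, forall e, offset_range l r (lhs x) (rhs x) e}]}].

(* Once x_0 = f^d x_(j+1), the block of x_(j+1) grows to cover that of x_0. *)
Definition merge_left (l : nat -> int) j d i :=
  if (i == j)%N then Num.max (l j.+1) (l 0%N - d) else l i.+1.
Definition merge_right (r : nat -> int) j d i :=
  if (i == j)%N then Num.max (r j.+1) (r 0%N + d) else r i.+1.

Lemma admissible_sub c cs cs' l r :
  admissible c cs l r -> {subset cs' <= cs} -> admissible c cs' l r.
Proof. by move=> [sum_le lr_ge0 cs_ok] cs'cs; split=> // x /cs'cs /cs_ok. Qed.

Lemma admissible_flip c x cs l r :
  admissible c (x :: cs) l r -> admissible c (flip x :: cs) l r.
Proof.
move=> [sum_le lr_ge0 cs_ok]; split=> // y; rewrite inE => /predU1P [->|ycs];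
  last by apply: cs_ok; rewrite inE ycs orbT.
have [x_a x_b x_u x_range] := cs_ok x (mem_head _ _).
split=> //=; first by rewrite map_inj_uniq //; apply: oppr_inj.
move=> _ /mapP [e /x_range eD ->]; move: eD; rewrite /offset_range eq_sym.
by case: eqP => _; lia.
Qed.

Lemma admissible_pair_le c cs l r j : admissible c.+1 cs l r -> (j < c)%N ->
  l 0%N + r 0%N + 1 + (l j.+1 + r j.+1 + 1) <= K%:Z.
Proof.
move=> [sum_le lr_ge0 _] jc; apply: le_trans sum_le.
by apply: (sum_ord_pair_le (w := fun i => l i + r i + 1)) => // i; have [] := lr_ge0 i; lia.
Qed.

Lemma admissible_offsets_close c j D p cs l r :
  admissible c.+1 (Constr 0 j.+1 D p :: cs) l r ->
  {in D &, forall d d', `|d - d'| <= K%:Z}.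
Proof.
move=> adm d d' dD d'D; have [_ lr_ge0 cs_ok] := adm.
have [_ jc _ D_range] := cs_ok _ (mem_head _ _).
have := admissible_pair_le adm jc.
have [l0 r0] := lr_ge0 0%N; have [lj rj] := lr_ge0 j.+1.
move: (D_range d dD) (D_range d' d'D); rewrite /offset_range /=; lia.
Qed.

Lemma admissible_subst0 c j d cs l r :
  admissible c.+1 cs l r -> (j < c)%N -> offset_range l r 0 j.+1 d ->
  admissible c (map (subst0 j d) cs) (merge_left l j d) (merge_right r j d).
Proof.
move=> adm jc d_range; have [sum_le lr_ge0 cs_ok] := adm.
have [l0 r0] := lr_ge0 0%N; have [lj rj] := lr_ge0 j.+1.
have pair_le := admissible_pair_le adm jc.
move: d_range; rewrite /offset_range /= => d_range.
split.
- apply: le_trans sum_le.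
  apply: (sum_ord_merge_le (w := fun i => l i + r i + 1)
    (w' := fun i => merge_left l j d i + merge_right r j d i + 1) jc).
  + by move=> i; have [] := lr_ge0 i; lia.
  + by move=> i /negbTE ij; rewrite /merge_left /merge_right ij.
  + by rewrite /merge_left /merge_right eqxx; lia.
- by move=> i; rewrite /merge_left /merge_right; case: eqP => _; [lia | apply: lr_ge0].
move=> _ /mapP [x /cs_ok [x_a x_b x_u x_range] ->].
split=> /=.
- by case: (lhs x) x_a.
- by case: (rhs x) x_b.
- by rewrite map_inj_uniq // => e1 e2 /addIr /addIr.
move=> _ /mapP [e /x_range + ->]; rewrite /offset_range /merge_left /merge_right.
case: (lhs x) => [|a]; case: (rhs x) => [|b] /=;
  repeat case: eqP => [?|?]; subst; lia.
Qed.

Lemma admissible_drop0 c cs l r :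
  admissible c.+1 cs l r -> {in cs, forall x, lhs x != 0%N /\ rhs x != 0%N} ->
  admissible c (map drop0 cs) (fun i => l i.+1) (fun i => r i.+1).
Proof.
move=> [sum_le lr_ge0 cs_ok] free0; split=> //.
- apply: le_trans sum_le; apply: (@sum_ord_behead_le _ c (fun i => l i + r i + 1)) => i.
  by have [] := lr_ge0 i; lia.
move=> _ /mapP [x xcs ->]; have [x_a x_b x_u x_range] := cs_ok x xcs.
have [] := free0 x xcs; rewrite /offset_range /=.
by case: (lhs x) x_a x_range => [|a] //; case: (rhs x) x_b => [|b].
Qed.

End Admissible.

Lemma admissible_orient K c cs l r x :
  admissible K c.+1 cs l r -> x \in cs -> lhs x != rhs x -> (lhs x == 0) || (rhs x == 0) ->
  exists j D p, [/\ admissible K c.+1 (Constr 0 j.+1 D p :: rem x cs) l r,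
    weight (Constr 0 j.+1 D p :: rem x cs) = weight cs &
    forall (V : finType) (f g : V -> V) (x0 : V), cancel f g -> cancel g f -> forall s,
      all (holds f g x0 s) cs = all (holds f g x0 s) (Constr 0 j.+1 D p :: rem x cs)].
Proof.
move=> adm xcs x_ab x_0; rewrite (weight_rem xcs).
have adm_x : admissible K c.+1 (x :: rem x cs) l r.
  by apply: (admissible_sub adm) => y; rewrite inE => /predU1P [->|/mem_rem].
case: x xcs x_ab x_0 adm_x => [[|a] [|b] D p] //= xcs _ _ adm_x.
  by exists b, D, p; split=> // V f g x0 fK gK s; apply: all_holds_rem.
exists a, [seq (- e)%R | e <- D], p; split.
- exact: admissible_flip adm_x.
- by rewrite /weight /= size_map.
move=> V f g x0 fK gK s; rewrite (all_holds_rem _ _ _ xcs) /=.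
by rewrite -[Constr 0 _ _ _]/(flip (Constr a.+1 0 D p)) holds_flip.
Qed.

Section Invariance.
Variables (V1 V2 : finType) (f1 g1 : V1 -> V1) (f2 g2 : V2 -> V2) (y1 : V1) (y2 : V2).
Hypotheses (f1K : cancel f1 g1) (g1K : cancel g1 f1) (f2K : cancel f2 g2) (g2K : cancel g2 f2).
Hypothesis card_V12 : #|V1| = #|V2|.
Variable K : nat.
Hypothesis long_orbits1 : forall x t, 0 < t <= K -> iter t f1 x != x.
Hypothesis long_orbits2 : forall x t, 0 < t <= K -> iter t f2 x != x.

Local Notation N1 := (nsol f1 g1 y1).
Local Notation N2 := (nsol f2 g2 y2).

Lemma nsol_eq_var0 c j D p R l r :
  (forall cs l r, admissible K c cs l r -> N1 c cs = N2 c cs) ->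
  (forall cs, weight cs < weight (Constr 0 j.+1 D p :: R) ->
     admissible K c.+1 cs l r -> N1 c.+1 cs = N2 c.+1 cs) ->
  admissible K c.+1 (Constr 0 j.+1 D p :: R) l r ->
  N1 c.+1 (Constr 0 j.+1 D p :: R) = N2 c.+1 (Constr 0 j.+1 D p :: R).
Proof.
move=> IHc IHw adm; have [_ _ cs_ok] := adm.
have /= [_ jc uD D_range] := cs_ok _ (mem_head _ _).
have admR : admissible K c.+1 R l r by apply: (admissible_sub adm) => x xR; rewrite inE xR orbT.
have [sum_le lr_ge0 R_ok] := admR; clear cs_ok.
case: p in adm IHw *.
  have close := admissible_offsets_close adm.
  rewrite (nsol_pos _ f1K g1K long_orbits1) // (nsol_pos _ f2K g2K long_orbits2) //.
  by apply: eq_big_seq => d dD; apply: IHc (admissible_subst0 admR jc (D_range d dD)).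
case: D uD D_range adm IHw => [|e D] uD D_range adm IHw.
  by rewrite !nsol_neg_nil; apply: IHw admR; rewrite /weight /=; lia.
have adm' : admissible K c.+1 (Constr 0 j.+1 D false :: R) l r.
  split=> // x; rewrite inE => /predU1P [->|/R_ok //].
  split=> //; first by case/andP: uD.
  by move=> d dD; apply: D_range; rewrite inE dD orbT.
have subst_eq := IHc _ _ _ (admissible_subst0 adm' jc (D_range e (mem_head _ _))).
have : N1 c.+1 (Constr 0 j.+1 D false :: R) = N2 c.+1 (Constr 0 j.+1 D false :: R).
  by apply: IHw adm'; rewrite /weight /=; lia.
by rewrite (nsol_neg _ f1K g1K _ _ e) (nsol_neg _ f2K g2K _ _ e) subst_eq => /addIn.
Qed.

Lemma nsol_invariant c cs l r : admissible K c cs l r -> N1 c cs = N2 c cs.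
Proof.
elim: c cs l r => [|c IHc] cs l r.
  case: cs => [_|x cs [_ _ cs_ok]]; last by have [] := cs_ok x (mem_head _ _).
  by rewrite /nsol !sum_nat_const !card_tuple.
have [w] := ubnP (weight cs); elim: w cs => // w IHw cs /ltnSE weight_cs adm.
have [_ _ cs_ok] := adm.
have IHcs cs' : weight cs' < weight cs -> admissible K c.+1 cs' l r -> N1 c.+1 cs' = N2 c.+1 cs'.
  by move=> lt_cs'; apply: IHw; apply: leq_trans weight_cs.
have [/hasP [x xcs /eqP x_loop] | /hasPn no_loop] := boolP (has (fun x => lhs x == rhs x) cs).
  have [_ _ _ x_range] := cs_ok x xcs.
  have small : {in offsets x, forall e, `|e| <= K%:Z}%R.
    by move=> e /x_range; rewrite /offset_range x_loop eqxx.
  rewrite (nsol_loop _ f1K g1K long_orbits1 _ xcs) // (nsol_loop _ f2K g2K long_orbits2 _ xcs) //.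
  case: ifP => // _; apply: IHcs; last by apply: (admissible_sub adm) => y /mem_rem.
  by rewrite [ltnRHS](weight_rem xcs) addSn ltnS leq_addl.
have [/hasP [x xcs x_0] | /hasPn free] := boolP (has (fun x => (lhs x == 0) || (rhs x == 0)) cs).
  have [j [D [p [adm' weight_eq holds_eq]]]] := admissible_orient adm xcs (no_loop x xcs) x_0.
  rewrite (eq_nsol _ (holds_eq _ _ _ _ f1K g1K)) (eq_nsol _ (holds_eq _ _ _ _ f2K g2K)).
  by apply: nsol_eq_var0 IHc _ adm' => cs'; rewrite weight_eq; apply: IHcs.
have free0 : {in cs, forall x, lhs x != 0 /\ rhs x != 0}.
  by move=> x /free; rewrite negb_or => /andP.
rewrite !nsol_free // card_V12; congr (_ * _).
exact: IHc (admissible_drop0 adm free0).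
Qed.

End Invariance.

Section InducedEmbeddings.
Variables (W : finType) (eL : rel W).

Definition induced_embedding (V : finType) (eG : rel V) (h : {ffun W -> V}) : bool :=
  injectiveb h && [forall u, forall v, eG (h u) (h v) == eL u v].

Definition n_embeddings (V : finType) (eG : rel V) : nat :=
  #|[set h | induced_embedding eG h]|.

Lemma n_embeddings_gt0 : 0 < n_embeddings eL.
Proof.
apply/card_gt0P; exists [ffun u => u]; rewrite inE; apply/andP; split.
  by apply/injectiveP => u v; rewrite !ffunE.
by apply/forallP => u; apply/forallP => v; rewrite !ffunE.
Qed.

Variables (V : finType) (eG : rel V).

Lemma card_embeddings_onto (X : {set V}) (h0 : {ffun W -> V}) :
  induced_embedding eG h0 -> h0 @: [set: W] = X ->
  #|[set h | induced_embedding eG h & h @: [set: W] == X]| = n_embeddings eL.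
Proof.
move=> /andP [/injectiveP h0_inj /forallP h0_adj] h0X.
have h0E u v : eG (h0 u) (h0 v) = eL u v by apply/eqP/(forallP (h0_adj u)).
pose compose (a : {ffun W -> W}) := [ffun u => h0 (a u)].
have compose_inj : injective compose.
  by move=> a a' /ffunP aa'; apply/ffunP => u; apply: h0_inj; have := aa' u; rewrite !ffunE.
rewrite /n_embeddings -(card_imset _ compose_inj); apply: eq_card => h.
rewrite !inE; apply/andP/imsetP => [[/andP [/injectiveP h_inj /forallP h_adj] /eqP hX]|].
  pose a := [ffun u => odflt u [pick w | h0 w == h u]].
  have h0a u : h0 (a u) = h u.
    rewrite ffunE; case: pickP => [w /eqP //|no_w].
    have : h u \in h0 @: [set: W] by rewrite h0X -hX imset_f.
    by case/imsetP => w _ hw; have := no_w w; rewrite hw eqxx.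
  exists a; last by apply/ffunP => u; rewrite ffunE h0a.
  rewrite inE; apply/andP; split.
    by apply/injectiveP => u v auv; apply: h_inj; rewrite -!h0a auv.
  apply/forallP => u; apply/forallP => v; rewrite -h0E !h0a.
  exact: (forallP (h_adj u)).
move=> [a]; rewrite inE => /andP [/injectiveP a_inj /forallP a_adj] ->.
split.
  apply/andP; split; first by apply/injectiveP => u v; rewrite !ffunE => /h0_inj/a_inj.
  by apply/forallP => u; apply/forallP => v; rewrite !ffunE h0E; apply: (forallP (a_adj u)).
have a_onto : a @: [set: W] = [set: W].
  by apply/eqP; rewrite eqEcard subsetT card_imset //= cardsT.
apply/eqP; rewrite -h0X -[in RHS]a_onto -imset_comp.
by apply: eq_imset => u; rewrite /= ffunE.
Qed.

Lemma n_embeddings_s_count : n_embeddings eG = s_count eG eL * n_embeddings eL.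
Proof.
rewrite /n_embeddings -sum1_card (partition_big (fun h : {ffun W -> V} => h @: [set: W]) predT) //=.
rewrite /s_count -sum_nat_const [RHS]big_mkcond /=; apply: eq_bigr => X _.
rewrite sum1_card inE; case: ifP => [/existsP [h0 /and3P [h0_inj /eqP h0X h0_adj]]|no_iso].
  rewrite -/(n_embeddings eL) -(@card_embeddings_onto X h0) ?h0X /induced_embedding ?h0_inj //.
  by apply: eq_card => h; rewrite -topredE /= !inE.
apply: eq_card0 => h; rewrite -topredE /= !inE.
apply/negbTE/andP => -[/andP [h_inj h_adj] hX].
by move: no_iso => /negbT/existsPn/(_ h); rewrite h_inj hX h_adj.
Qed.

End InducedEmbeddings.

Definition adjacency_offsets (p : bool) : seq int :=
  if p then [:: 1; -1]%R else [:: -1; 0; 1]%R.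

Section PatternConstraints.
Variables (W : finType) (eL : rel W).

Definition pattern_constr (ij : 'I_#|W| * 'I_#|W|) : constr :=
  let p := eL (enum_val ij.1) (enum_val ij.2) in Constr ij.1 ij.2 (adjacency_offsets p) p.

Definition pattern_constrs : seq constr :=
  [seq pattern_constr ij | ij <- [seq (i, j) | i <- enum 'I_#|W|, j <- enum 'I_#|W|]
                         & ij.1 != ij.2].

Lemma admissible_pattern :
  admissible #|W| #|W| pattern_constrs (fun _ => 0%R) (fun _ => 0%R).
Proof.
split=> //.
  rewrite (eq_bigr (fun _ => 1%R)) => [|i _]; last by rewrite !add0r.
  by rewrite sumr_const card_ord natz.
move=> x /mapP [[i j]]; rewrite mem_filter /= => /andP [ij _] ->.
split=> //=; first by case: (eL _ _).
move=> e; rewrite /offset_range val_eqE (negbTE ij); case: (eL _ _); rewrite !inE.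
  by case/orP => /eqP ->.
by case/or3P => /eqP ->.
Qed.

Variables (V : finType) (f g : V -> V) (eG : rel V) (x0 : V).
Hypotheses (fK : cancel f g) (gK : cancel g f) (f_nofix : forall a, f a != a).
Hypothesis adjE : forall a b, eG a b = (b == f a) || (a == f b).

Lemma mem_adjacency_offsets a b (p : bool) :
  ((a \in [seq iterz f g d b | d <- adjacency_offsets p]) == p) = (eG a b == p) && (a != b).
Proof.
have g_nofix : g b != b by apply: contra (f_nofix b) => /eqP {1}<-; rewrite gK.
have fE : (b == f a) = (a == g b) by rewrite eq_sym (can2_eq fK gK).
case: p; rewrite /= !inE adjE fE; case: (a =P b) => [->|_] //=.
- by rewrite ![b == _ b]eq_sym (negbTE (f_nofix b)) (negbTE g_nofix).
- by rewrite orbC andbT.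
- by rewrite orbT andbF.
by rewrite andbT.
Qed.

Lemma induced_embedding_pattern (h : {ffun W -> V}) :
  irreflexive eL -> irreflexive eG ->
  induced_embedding eL eG h = all (holds f g x0 (fgraph h)) pattern_constrs.
Proof.
move=> irrL irrG.
have nth_h (i : 'I_#|W|) : nth x0 (fgraph h) i = h (enum_val i).
  by rewrite -tnth_nth tnth_fgraph.
rewrite /pattern_constrs all_map all_filter; apply/idP/all_allpairsP.
  move=> /andP [/injectiveP h_inj /forallP h_adj] i j _ _ /=; apply/implyP => ij.
  rewrite /holds /= !nth_h mem_adjacency_offsets (forallP (h_adj _)) /=.
  by apply: contra ij => /eqP/h_inj/enum_val_inj ->.
move=> pattern_ok.
have h_ok u v : u != v -> (eG (h u) (h v) == eL u v) && (h u != h v).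
  move=> uv; have := pattern_ok (enum_rank u) (enum_rank v) (mem_enum _ _) (mem_enum _ _).
  rewrite /= /holds /= !nth_h !enum_rankK mem_adjacency_offsets => /implyP; apply.
  by rewrite (inj_eq enum_rank_inj).
apply/andP; split.
  apply/injectiveP => u v huv; apply/eqP; apply: contraT => uv.
  by have := h_ok u v uv; rewrite huv eqxx andbF.
apply/forallP => u; apply/forallP => v.
by case: (eqVneq u v) => [->|/h_ok /andP []]; rewrite ?irrL ?irrG.
Qed.

Lemma n_embeddings_nsol : irreflexive eL -> irreflexive eG ->
  n_embeddings eL eG = nsol f g x0 #|W| pattern_constrs.
Proof.
move=> irrL irrG; rewrite /n_embeddings -sum1_card big_mkcond /nsol.
rewrite (reindex (@fgraph W V)) /=; last first.
  by exists (@Finfun W V) => h _; [rewrite fgraphK | rewrite FinfunK].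
by apply: eq_bigr => h _; rewrite inE -induced_embedding_pattern //; case: ifP.
Qed.

End PatternConstraints.

Lemma modS_inj m i j : i < m -> j < m -> i.+1 %% m = j.+1 %% m -> i = j.
Proof.
move=> im jm ij; have : i + 1 == j + 1 %[mod m] by rewrite !addn1 ij.
by rewrite eqn_modDr !modn_small // => /eqP.
Qed.

Definition cycle_walk (V : finType) (e : rel V) c m (walk : nat -> V) x : Prop :=
  [/\ (2 < m) && (c <= m),
   forall i j, i < m -> j < m -> walk i = walk j -> i = j,
   forall i, i < m -> connect e x (walk i),
   forall v, connect e x v -> exists2 i, i < m & walk i = v &
   forall i j, i < m -> j < m -> e (walk i) (walk j) = (j == i.+1 %% m) || (i == j.+1 %% m)].

Section CycleRotation.
Variables (V : finType) (e : rel V) (K : nat).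
Hypothesis e_sym : symmetric e.
Variables (len : V -> nat) (walk : V -> nat -> V).
Hypothesis walkP : forall x, cycle_walk e K.+1 (len x) (walk x) x.

Local Notation root := (fingraph.root e).
Let e_csym : connect_sym e := sym_connect_sym e_sym.

(* Every component is walked from its root, so that all its vertices are
   rotated in the same direction. *)
Definition period v := len (root v).
Definition place v := odflt 0 (omap val [pick i : 'I_(period v) | walk (root v) i == v]).
Definition rotate v := walk (root v) ((place v).+1 %% period v).

Lemma period_gt0 v : 0 < period v.
Proof. by have [/andP [len_gt2 _] _ _ _ _] := walkP (root v); apply: leq_trans len_gt2. Qed.

Lemma placeP v : place v < period v /\ walk (root v) (place v) = v.
Proof.
rewrite /place; case: pickP => [i /eqP iv|no_pos] /=; first by split.
have [_ _ _ onto _] := walkP (root v).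
have [i ilt iv] := onto v (etrans (e_csym _ _) (connect_root e v)).
by have := no_pos (Ordinal ilt); rewrite /= iv eqxx.
Qed.

Lemma root_walk v i : i < period v -> root (walk (root v) i) = root v.
Proof.
have [_ _ conn _ _] := walkP (root v).
by move=> /conn /(fingraph.rootP e_csym) <-; rewrite root_root.
Qed.

Lemma place_walk v i : i < period v -> place (walk (root v) i) = i.
Proof.
move=> ilt; have [_ inj _ _ _] := walkP (root v).
have [] := placeP (walk (root v) i); rewrite /period root_walk // => /inj; apply => //.
Qed.

Lemma place_inj v w : root v = root w -> place v = place w -> v = w.
Proof. by move=> vw pvw; case: (placeP v) (placeP w) => _ <- [_ <-]; rewrite vw pvw. Qed.

Lemma root_rotate v : root (rotate v) = root v.
Proof. by rewrite root_walk // ltn_pmod ?period_gt0. Qed.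

Lemma place_rotate v : place (rotate v) = (place v).+1 %% period v.
Proof. by rewrite place_walk // ltn_pmod ?period_gt0. Qed.

Lemma connect_rotate v : connect e v (rotate v).
Proof. by apply/(fingraph.rootP e_csym); rewrite root_rotate. Qed.

Lemma rotate_eq v w : root v = root w -> (w == rotate v) = (place w == (place v).+1 %% period v).
Proof.
move=> vw; apply/eqP/eqP => [->|pw]; first exact: place_rotate.
by apply: place_inj; rewrite ?root_rotate ?place_rotate.
Qed.

Lemma adj_rotate u w : e u w = (w == rotate u) || (u == rotate w).
Proof.
have [uw|not_uw] := boolP (connect e u w).
  have ruw := fingraph.rootP e_csym uw.
  have [[ltu wu] [ltw ww]] := (placeP u, placeP w).
  rewrite /period -ruw in ltw ww; have [_ _ _ _ adj] := walkP (root u).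
  by rewrite (rotate_eq ruw) (rotate_eq (esym ruw)) /period -ruw -{1}wu -{1}ww adj.
rewrite (contraNF (@connect1 _ e u w)) //.
apply/esym/norP; split; apply: contra not_uw => /eqP ->; first exact: connect_rotate.
by rewrite e_csym connect_rotate.
Qed.

Lemma rotate_inj : injective rotate.
Proof.
move=> u w uw; have ruw : root u = root w by rewrite -root_rotate uw root_rotate.
apply: place_inj => //; have [[ltu _] [ltw _]] := (placeP u, placeP w).
move: (congr1 place uw); rewrite !place_rotate /period ruw in ltu *.
exact: modS_inj.
Qed.

Lemma iter_rotate v t :
  root (iter t rotate v) = root v /\ place (iter t rotate v) = (place v + t) %% period v.
Proof.
elim: t => [|t [rt pt]] /=; first by rewrite addn0 modn_small //; case: (placeP v).
by rewrite root_rotate place_rotate rt pt /period rt -/(period v) -addn1 modnDml -addnA addn1.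
Qed.

Lemma iter_rotate_neq v t : 0 < t < period v -> iter t rotate v != v.
Proof.
case/andP=> t_gt0 t_lt; apply/eqP => tv; have [_] := iter_rotate v t.
rewrite tv => pt; have [lt _] := placeP v.
have : place v + t == place v + 0 %[mod period v] by rewrite -pt addn0 modn_small.
by rewrite eqn_modDl mod0n modn_small // => /eqP t0; rewrite t0 in t_gt0.
Qed.

Lemma period_gtK v : K < period v.
Proof. by have [/andP [_ lenK] _ _ _ _] := walkP (root v). Qed.

End CycleRotation.

Lemma cycle_walks (V : finType) (e : rel V) c : cycle_components_atleast e c ->
  exists len walk, forall x : V, cycle_walk e c (len x) (walk x) x.
Proof.
move=> cycles.
have /fin_all_exists [lw lwP] x : exists lw : nat * (nat -> V), cycle_walk e c lw.1 lw.2 x.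
  have [m [w [m3 [mc [w_inj [w_onto w_adj]]]]]] := cycles x.
  pose wn i := odflt x (omap w (insub i)).
  have wnE (i : 'I_m) : wn i = w i by rewrite /wn valK.
  exists (m, wn); split=> /=.
  - by rewrite m3 mc.
  - move=> i j im jm; rewrite -[i]/(val (Ordinal im)) -[j]/(val (Ordinal jm)) !wnE.
    by move=> /w_inj ->.
  - move=> i im; rewrite -[i]/(val (Ordinal im)) wnE.
    have : w (Ordinal im) \in component e x by rewrite -w_onto imset_f.
    by rewrite inE.
  - move=> v xv; have : v \in w @: [set: 'I_m] by rewrite w_onto inE.
    by case/imsetP => i _ ->; exists i; rewrite ?wnE.
  by move=> i j im jm; rewrite -[i]/(val (Ordinal im)) -[j]/(val (Ordinal jm)) !wnE.
by exists (fun x => (lw x).1), (fun x => (lw x).2).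
Qed.

Lemma cycle_rotation (V : finType) (e : rel V) K :
  symmetric e -> cycle_components_atleast e K.+1 ->
  exists f g : V -> V, [/\ cancel f g, cancel g f, forall a, f a != a,
    forall a b, e a b = (b == f a) || (a == f b) &
    forall v t, 0 < t <= K -> iter t f v != v].
Proof.
move=> e_sym /cycle_walks [len [walk walkP]].
have rot_inj := rotate_inj e_sym walkP.
exists (rotate e len walk), (invF rot_inj); split.
- exact: invF_f.
- exact: f_invF.
- move=> a; apply: (iter_rotate_neq e_sym walkP (t := 1)).
  by have [/andP [len_gt2 _] _ _ _ _] := walkP (fingraph.root e a); apply: ltn_trans len_gt2.
- exact: adj_rotate.
move=> v t /andP [t_gt0 tK]; apply: (iter_rotate_neq e_sym walkP).
by rewrite t_gt0 (leq_ltn_trans tK) // (period_gtK walkP).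
Qed.

Theorem theorem3p3 (W : finType) (eL : rel W) (k n : nat)
    (V V' : finType) (eG : rel V) (eG' : rel V') :
  simple_graph eL -> linear_forest eL -> #|W| = k ->
  0 < n ->
  simple_graph eG -> #|V| = n -> cycle_components_atleast eG k.+1 ->
  simple_graph eG' -> #|V'| = n -> cycle_components_atleast eG' k.+1 ->
  s_count eG eL = s_count eG' eL.
Proof.
move=> [_ irrL] _ <- n_gt0 [symG irrG] Vn cycG [symG' irrG'] V'n cycG'.
have [f [g [fK gK f_nofix adjG orbitsG]]] := cycle_rotation symG cycG.
have [f' [g' [fK' gK' f'_nofix adjG' orbitsG']]] := cycle_rotation symG' cycG'.
have /card_gt0P [x0 _] : 0 < #|V| by rewrite Vn.
have /card_gt0P [x0' _] : 0 < #|V'| by rewrite V'n.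
apply/eqP; rewrite -(eqn_pmul2r (n_embeddings_gt0 eL)) -!n_embeddings_s_count.
rewrite (n_embeddings_nsol x0 fK gK f_nofix adjG irrL irrG).
rewrite (n_embeddings_nsol x0' fK' gK' f'_nofix adjG' irrL irrG').
have cardVV' : #|V| = #|V'| by rewrite Vn V'n.
by rewrite (nsol_invariant x0 x0' fK gK fK' gK' cardVV' orbitsG orbitsG' (admissible_pattern eL)).
Qed.
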